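(* Let $G$ be a graph on vertex set $[n]$ and $r\ge1$ an integer, and suppose that no vertex of $G$ has more than one cycle in its $r$-neighborhood. Define the relation $i\sim j$ iff there is a cycle contained in the intersection of the $r$-neighborhoods of $i$ and $j$, and let $B=A^{[r]}-A^{\{r\}}$. Then for all $i,j\in[n]$: (i) $B_{ij}\ne0$ implies $i\sim j$; (ii) $B_{ij}\ne0$ implies there are at least two paths of length $\le r$ from $i$ to $j$; (iii) $|B_{ij}|\le 1$; (iv) there are at most two paths of length $\le r$ from $i$ to $j$.
   Context: The $r$-neighborhood of a vertex $v$ is the subgraph of $G$ induced by vertices at graph distance at most $r$ from $v$. $A^{[r]}$ is the $r$-distance matrix: $A^{[r]}_{ij}=1$ if $d_G(i,j)=r$ and $0$ otherwise. $A^{\{r\}}$ is the length-$r$ self-avoiding-walk matrix: $A^{\{r\}}_{ij}$ is the number of self-avoiding walks (paths) of length exactly $r$ between $i$ and $j$. *)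

From mathcomp Require Import all_boot all_order all_algebra.
Set Implicit Arguments. Unset Strict Implicit. Unset Printing Implicit Defensive.
Import GRing.Theory Num.Theory.

Definition simple_graph n (adj : rel 'I_n) : Prop :=
  symmetric adj /\ irreflexive adj.

Definition walk_len n (adj : rel 'I_n) (i j : 'I_n) (k : nat) : bool :=
  [exists t : k.-tuple 'I_n, path adj i t && (last i t == j)].

(* graph distance d_G(i,j) = r (false if i, j are in different components) *)
Definition dist_eq n (adj : rel 'I_n) (i j : 'I_n) (r : nat) : bool :=
  walk_len adj i j r && [forall k : 'I_r, ~~ walk_len adj i j k].

Definition dist_le n (adj : rel 'I_n) (i j : 'I_n) (r : nat) : bool :=
  [exists k : 'I_r.+1, walk_len adj i j k].

(* r-ball around v: vertex set of the r-neighborhood (an induced subgraph) *)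
Definition ball n (adj : rel 'I_n) (v : 'I_n) (r : nat) : {set 'I_n} :=
  [set u | dist_le adj v u r].

Definition npaths n (adj : rel 'I_n) (i j : 'I_n) (k : nat) : nat :=
  #|[set t : k.-tuple 'I_n | [&& path adj i t, last i t == j & uniq (i :: t)]]|.

Definition npaths_le n (adj : rel 'I_n) (i j : 'I_n) (r : nat) : nat :=
  \sum_(k < r.+1) npaths adj i j k.

Definition distmx n (adj : rel 'I_n) (r : nat) : 'M[int]_n :=
  \matrix_(i, j) (dist_eq adj i j r)%:R%R.

Definition sawmx n (adj : rel 'I_n) (r : nat) : 'M[int]_n :=
  \matrix_(i, j) (npaths adj i j r)%:R%R.

Definition cycle_seq n (adj : rel 'I_n) (s : seq 'I_n) : bool :=
  [&& 3 <= size s, uniq s & cycle adj s].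

(* The cycle as a subgraph: its edge set (edges as 2-element vertex sets).
   Two cyclic sequences denote the same cycle iff they have the same edges. *)
Definition cycle_edges n (s : seq 'I_n) : {set {set 'I_n}} :=
  [set [set p.1; p.2] | p in zip s (rot 1 s)].

Definition cycle_in n (adj : rel 'I_n) (S : {set 'I_n}) (s : seq 'I_n) : bool :=
  cycle_seq adj s && all (fun v => v \in S) s.

Definition at_most_one_cycle_in_balls n (adj : rel 'I_n) (r : nat) : Prop :=
  forall (v : 'I_n) (s1 s2 : seq 'I_n),
    cycle_in adj (ball adj v r) s1 -> cycle_in adj (ball adj v r) s2 ->
    cycle_edges s1 = cycle_edges s2.

Definition cyc_rel n (adj : rel 'I_n) (r : nat) (i j : 'I_n) : Prop :=
  exists s : seq 'I_n, cycle_in adj (ball adj i r :&: ball adj j r) s.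

From mathcomp Require Import all_boot all_order all_algebra zify.
Import GRing.Theory Num.Theory.
Set Implicit Arguments. Unset Strict Implicit. Unset Printing Implicit Defensive.

(* Two distinct self-avoiding walks of length at most r from i to j differ
   somewhere, so their union contains a cycle, and every vertex on them lies
   within distance r of both i and j; this gives (i) once (ii) is known.
   Three distinct such walks are impossible.  Strip their common initial
   segment and let a be the vertex where they branch; one walk leaves a
   through a vertex x used as first step by neither of the others.  That walk
   together with another one closes a cycle through the edge {a, x}, while the
   other two walks close a cycle whose edges at a all go to their own first
   steps; these are two different cycles in the r-ball of i.  Finally
   B_ij = [d(i,j) = r] - #(paths of length r), so B_ij <> 0 forces either two
   paths of length r, or a path of length r next to a shorter one; since there
   are at most two paths in all, |B_ij| <= 1. *)

Lemma mem_zip (S T : eqType) (s : seq S) (t : seq T) x y :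
  (x, y) \in zip s t -> x \in s /\ y \in t.
Proof.
elim: s t => [|a s IHs] [|b t] //=; rewrite inE => /orP[/eqP[-> ->]|/IHs[xs yt]].
  by split; apply: mem_head.
by rewrite !inE xs yt !orbT.
Qed.

Section UniqSeq.
Variable T : eqType.
Implicit Types s : seq T.

Lemma uniq_size_gt1 s : uniq s -> 1 < size s ->
  exists x y, [/\ x \in s, y \in s & x != y].
Proof.
case: s => [|x [|y s]] //= /andP[+ _]; rewrite inE negb_or => /andP[xy _] _.
by exists x, y; rewrite !inE !eqxx orbT.
Qed.

Lemma uniq_size_gt2 s : uniq s -> 2 < size s ->
  exists x y z, [/\ x \in s, y \in s & z \in s] /\ [/\ x != y, y != z & z != x].
Proof.
case: s => [|x [|y [|z s]]] //=; rewrite !inE !negb_or.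
case/and3P=> /and3P[xy xz _] /andP[yz _] _ _.
exists x, y, z; split; first by rewrite !inE !eqxx !orbT.
by rewrite xy yz eq_sym xz.
Qed.

Lemma path_rev_sym (e : rel T) x s : symmetric e ->
  path e (last x s) (rev (belast x s)) = path e x s.
Proof. by move=> e_sym; rewrite rev_path (@eq_path _ _ e) // => u v; apply: e_sym. Qed.

End UniqSeq.

Definition saw (T : eqType) (e : rel T) (a b : T) (s : seq T) : bool :=
  [&& path e a s, last a s == b & uniq (a :: s)].

Section SelfAvoidingWalks.
Variables (T : eqType) (e : rel T).
Implicit Types (a b x : T) (s t : seq T).

Lemma saw_loop a s : saw e a a s -> s = [::].
Proof.
case: s => //= x s /and3P[_ /eqP ls /andP[+ _]].
by rewrite -{1}ls /= mem_last.
Qed.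

Lemma saw_nil a b s : saw e a b [::] -> saw e a b s -> s = [::].
Proof. by case/and3P=> _ /= /eqP <- _; apply: saw_loop. Qed.

Lemma saw_behead a b x s : saw e a b (x :: s) -> saw e x b s.
Proof. by case/and3P=> /= /andP[_ ps] ls /andP[_ us]; apply/and3P. Qed.

Lemma saw_mem_last a b s : saw e a b s -> b \in a :: s.
Proof. by case/and3P=> _ /eqP <- _; apply: mem_last. Qed.

End SelfAvoidingWalks.

Section CycleEdges.
Variable n : nat.
Implicit Types (a u v z : 'I_n) (c : seq 'I_n).

Lemma mem_cycle_edges c u v : [set u; v] \in cycle_edges c -> u \in c.
Proof.
case/imsetP=> -[x y] /mem_zip[xc yc] E.
have : u \in [set x; y] by rewrite -E set21.
by case/set2P=> ->; rewrite // -(mem_rot 1).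
Qed.

Lemma cycle_edges_head a c : c != [::] -> [set a; head a c] \in cycle_edges (a :: c).
Proof.
by case: c => // x c _; apply/imsetP; exists (a, x) => //; rewrite rot1_cons mem_head.
Qed.

Lemma cycle_edges_at a c z : uniq (a :: c) -> z != a ->
  [set a; z] \in cycle_edges (a :: c) -> z = head a c \/ z = last a c.
Proof.
move=> /andP[ac _] za /imsetP[[u v] uv /= E].
move: uv; have [[-> ->]|[-> ->]] : (u = a /\ v = z) \/ (u = z /\ v = a).
  move: za; have := set21 a z; have := set22 a z; rewrite E.
  by case/set2P=> -> /set2P[]-> ; rewrite ?eqxx //; [right | left].
- rewrite rot1_cons; case: c ac => [|x c] ac /=; rewrite inE.
    by case/eqP=> zx; rewrite zx eqxx in za.
  by case/orP=> [/eqP[->]|/mem_zip[ax _]]; [left | rewrite ax in ac].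
- rewrite rot1_cons [a :: c]lastI zip_rcons ?size_belast // mem_rcons inE.
  by case/orP=> [/eqP[->]|/mem_zip[_ ac']]; [right | rewrite ac' in ac].
Qed.

End CycleEdges.

Section CyclesFromWalks.
Variables (n : nat) (e : rel 'I_n).
Hypothesis e_sym : symmetric e.
Implicit Types (a b x y z : 'I_n) (s t p q c : seq 'I_n).

Lemma branching_saws_cycle a b p q :
  saw e a b p -> saw e a b q -> head a p != head a q ->
  exists c, [/\ cycle_seq e (a :: c), head a c = head a p, last a c = head a q
              & {subset c <= p ++ q}].
Proof.
move=> sp sq pq.
have ba : b != a.
  by apply: contraNneq pq => ba; move: sp sq; rewrite ba => /saw_loop-> /saw_loop->.
have [bp bq] : b \in p /\ b \in q.
  by move: (saw_mem_last sp) (saw_mem_last sq); rewrite !inE (negbTE ba).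
case: (split_find (_ : has (mem q) p)) sp pq; first by apply/hasP; exists b.
move=> w p0 p1 wq p0q sp pq; case/splitPr: wq sq pq p0q => q0 q1 sq pq p0q.
case/and3P: sp; rewrite cat_path -cat_cons cat_uniq => /andP[p_p0 _] _ /and3P[u_p0 _ _].
case/and3P: sq; rewrite -cat_rcons cat_path -cat_cons cat_uniq => /andP[p_q0 _] _.
rewrite /= mem_rcons inE negb_or rcons_uniq -andbA => /and3P[/andP[_ a_q0] /andP[w_q0 u_q0] _].
(* Follow p up to its first vertex w on q, then q backwards to a. *)
exists (rcons p0 w ++ rev q0); split.
- apply/and3P; split.
  + rewrite /= size_cat size_rcons size_rev addSn !ltnS addn_gt0 !lt0n !size_eq0.
    by case: p0 q0 pq {p_p0 u_p0 p0q p_q0 a_q0 w_q0 u_q0} => [|? ?] [|? ?] //=; rewrite eqxx.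
  + rewrite -cat_cons cat_uniq rev_uniq u_p0 u_q0 has_rev andbT.
    apply/hasPn=> z zq0; apply/negP; rewrite inE mem_rcons inE => /or3P[/eqP za|/eqP zw|zp0].
    * by rewrite -za zq0 in a_q0.
    * by rewrite -zw zq0 in w_q0.
    * have : z \notin q0 ++ w :: q1 := hasPn p0q z zp0.
      by rewrite mem_cat zq0.
  + rewrite /= rcons_cat cat_path p_p0 last_rcons.
    by rewrite -(path_rev_sym a _ e_sym) last_rcons belast_rcons rev_cons in p_q0.
- by case: p0 {pq p_p0 u_p0 p0q}.
- rewrite last_cat last_rcons.
  by case: q0 {pq p_q0 a_q0 w_q0 u_q0 p0q} => //= x q0; rewrite rev_cons last_rcons.
- move=> z; rewrite !mem_cat mem_rev => /orP[-> // | zq0].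
  by rewrite [z \in rcons q0 w]mem_rcons inE zq0 !orbT.
Qed.

Lemma distinct_saws_cycle a b s t : saw e a b s -> saw e a b t -> s != t ->
  exists c, [/\ cycle_seq e c, {subset c <= a :: s ++ t}
              & forall z, z != a -> [set a; z] \in cycle_edges c ->
                  z = head a s \/ z = head a t].
Proof.
elim: s a t => [|x s IHs] a t sas sat st; first by rewrite (saw_nil sas sat) eqxx in st.
case: t sat st => [|y t] sat st; first by rewrite (saw_nil sat sas) in st.
case: (eqVneq x y) sat st => [<- | xy] sat st.
  have st' : s != t by apply: contraNneq st => ->.
  have a_st : a \notin x :: s ++ t.
    move: sas sat => /and3P[_ _ /andP[a_s _]] /and3P[_ _ /andP[a_t _]].
    by move: a_t; rewrite -cat_cons mem_cat negb_or a_s in_cons negb_or => /andP[_ ->].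
  have [c [cc sub _]] := IHs x t (saw_behead sas) (saw_behead sat) st'.
  exists c; split=> // [z /sub | z _ /mem_cycle_edges /sub a_c]; last by rewrite a_c in a_st.
  by rewrite !inE !mem_cat !inE => /or3P[->|->|->]; rewrite ?orbT.
have [c [cc hc lc sub]] := branching_saws_cycle sas sat xy.
exists (a :: c); split=> // [z | z za /(cycle_edges_at _ za)].
  by rewrite !(in_cons a) => /orP[-> // | /sub ->]; rewrite orbT.
by rewrite hc lc; apply; case/and3P: cc.
Qed.

Lemma saws_cycle_in (V : {set 'I_n}) a s t c :
  {subset a :: s <= V} -> {subset a :: t <= V} ->
  cycle_seq e c -> {subset c <= a :: s ++ t} -> cycle_in e V c.
Proof.
move=> sV tV cc sub; rewrite /cycle_in cc; apply/allP=> z /sub.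
rewrite -cat_cons mem_cat => /orP[/sV // | zt].
by apply: tV; rewrite in_cons zt orbT.
Qed.

Section UniqueCycle.
Variable V : {set 'I_n}.
Hypothesis V_unique_cycle : forall c1 c2,
  cycle_in e V c1 -> cycle_in e V c2 -> cycle_edges c1 = cycle_edges c2.

Lemma branching_third_saw a b s1 s2 s3 :
  saw e a b s1 -> saw e a b s2 -> saw e a b s3 ->
  {subset a :: s1 <= V} -> {subset a :: s2 <= V} -> {subset a :: s3 <= V} ->
  s1 != s2 -> head a s3 \notin [:: head a s1; head a s2] -> False.
Proof.
move=> sa1 sa2 sa3 V1 V2 V3 s12; rewrite !inE negb_or => /andP[h31 h32].
have [c12 [cc12 sub12 edges12]] := distinct_saws_cycle sa1 sa2 s12.
have [c [cc hc _ sub]] := branching_saws_cycle sa3 sa1 h31.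
have sub' : {subset a :: c <= a :: s3 ++ s1}.
  by move=> z; rewrite !(in_cons a) => /orP[-> // | /sub ->]; rewrite orbT.
have E := V_unique_cycle (saws_cycle_in V1 V2 cc12 sub12) (saws_cycle_in V3 V1 cc sub').
case/and3P: cc => size_c /andP[a_c _] _.
have c0 : c != [::] by case: (c) size_c.
have h3a : head a s3 != a.
  by rewrite -hc; apply: contraNneq a_c => <-; case: (c) c0 => // y c' _; apply: mem_head.
have := cycle_edges_head a c0; rewrite hc -E => /(edges12 _ h3a).
by case=> /eqP; rewrite ?(negbTE h31) ?(negbTE h32).
Qed.

Lemma no_three_saws a b s1 s2 s3 :
  saw e a b s1 -> saw e a b s2 -> saw e a b s3 ->
  {subset a :: s1 <= V} -> {subset a :: s2 <= V} -> {subset a :: s3 <= V} ->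
  s1 != s2 -> s2 != s3 -> s3 != s1 -> False.
Proof.
elim: s1 a s2 s3 => [|x1 s1 IH] a s2 s3 sa1 sa2 sa3 V1 V2 V3 s12 s23 s31.
  by rewrite (saw_nil sa1 sa2) eqxx in s12.
case: s2 sa2 V2 s12 s23 => [|x2 s2] sa2 V2 s12 s23; first by rewrite (saw_nil sa2 sa1) in s12.
case: s3 sa3 V3 s23 s31 => [|x3 s3] sa3 V3 s23 s31; first by rewrite (saw_nil sa3 sa1) in s31.
have behead_V s : {subset a :: x1 :: s <= V} -> {subset x1 :: s <= V}.
  by move=> sV z zs; apply: sV; rewrite in_cons zs orbT.
have [x12 | x12] := eqVneq x1 x2.
  subst x2; have [x13 | x13] := eqVneq x1 x3.
    subst x3; apply: (IH x1 s2 s3 (saw_behead sa1) (saw_behead sa2) (saw_behead sa3));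
      try exact: behead_V.
    - by apply: contraNneq s12 => ->.
    - by apply: contraNneq s23 => ->.
    - by apply: contraNneq s31 => ->.
  by apply: (branching_third_saw sa1 sa2 sa3 V1 V2 V3 s12); rewrite !inE eq_sym (negbTE x13).
have [x3_new | ] := boolP (x3 \notin [:: x1; x2]).
  exact: (branching_third_saw sa1 sa2 sa3 V1 V2 V3 s12 x3_new).
rewrite negbK !inE => /pred2P[x31 | x32]; subst x3.
  apply: (branching_third_saw sa1 sa3 sa2 V1 V3 V2); first by rewrite eq_sym.
  by rewrite !inE eq_sym (negbTE x12).
by apply: (branching_third_saw sa2 sa3 sa1 V2 V3 V1 s23); rewrite !inE (negbTE x12).
Qed.

Lemma at_most_two_saws a b (L : seq (seq 'I_n)) : uniq L ->
  {in L, forall s, saw e a b s /\ {subset a :: s <= V}} -> size L <= 2.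
Proof.
move=> uL L_saws; rewrite leqNgt; apply/negP.
case/(uniq_size_gt2 uL)=> s1 [s2 [s3 [[L1 L2 L3] [s12 s23 s31]]]].
have [[sa1 V1] [sa2 V2]] := (L_saws _ L1, L_saws _ L2); have [sa3 V3] := L_saws _ L3.
exact: (no_three_saws sa1 sa2 sa3 V1 V2 V3 s12 s23 s31).
Qed.

End UniqueCycle.

End CyclesFromWalks.

Section WalksAndBalls.
Variables (n : nat) (adj : rel 'I_n).
Implicit Types (i j z : 'I_n) (s w : seq 'I_n).

Lemma walk_len_path i w : path adj i w -> walk_len adj i (last i w) (size w).
Proof. by move=> iw; apply/existsP; exists (in_tuple w); rewrite iw eqxx. Qed.

Lemma saw_walk_len i j s : saw adj i j s -> walk_len adj i j (size s).
Proof. by case/and3P=> ps /eqP <- _; apply: walk_len_path. Qed.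

Lemma walk_len_saw i j k : walk_len adj i j k -> exists2 s, saw adj i j s & size s <= k.
Proof.
case/existsP=> t /andP[pt /eqP <-]; case: (shortenP pt) => s ps us sub.
exists s; first by rewrite /saw ps eqxx us.
by rewrite -(size_tuple t); apply: uniq_leq_size sub; case/andP: us.
Qed.

Lemma dist_le_path i w z r : path adj i w -> size w <= r -> z \in i :: w -> dist_le adj i z r.
Proof.
move=> iw wr zw; case/splitPl: zw iw wr => w1 w2 <-.
rewrite cat_path size_cat => /andP[iw1 _] wr.
have w1r : size w1 < r.+1 by rewrite ltnS (leq_trans (leq_addr _ _) wr).
by apply/existsP; exists (Ordinal w1r); apply: walk_len_path.
Qed.

Lemma saw_sub_balls i j s r : symmetric adj -> saw adj i j s -> size s <= r ->
  {subset i :: s <= ball adj i r :&: ball adj j r}.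
Proof.
move=> adj_sym /and3P[ps /eqP ls _] sr z zs; rewrite !inE (dist_le_path ps sr zs) /=.
have js : path adj j (rev (belast i s)) by rewrite -ls path_rev_sym.
apply: (dist_le_path js); first by rewrite size_rev size_belast.
by rewrite -ls in_cons mem_rev -in_cons -mem_rcons -lastI.
Qed.

End WalksAndBalls.

Section CountingSaws.
Variables (n : nat) (adj : rel 'I_n) (i j : 'I_n).

Definition saw_set k := [set t : k.-tuple 'I_n | saw adj i j t].

Fixpoint saws_upto m : seq (seq 'I_n) :=
  if m is k.+1 then saws_upto k ++ map val (enum (saw_set k)) else [::].

Lemma saws_uptoP m :
  [/\ uniq (saws_upto m), size (saws_upto m) = \sum_(k < m) npaths adj i j k
    & {in saws_upto m, forall s, saw adj i j s /\ size s < m}].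
Proof.
elim: m => [|m [uL sizeL L_saws]] /=; first by rewrite big_ord0.
have block_saws : {in map val (enum (saw_set m)), forall s, saw adj i j s /\ size s = m}.
  by move=> s /mapP[t]; rewrite mem_enum inE => st ->; rewrite size_tuple.
split.
- rewrite cat_uniq uL (map_inj_uniq val_inj) ?enum_uniq // andbT /=.
  by apply/hasPn=> s /block_saws[_ sm]; apply/negP=> /L_saws[_]; rewrite sm ltnn.
- by rewrite size_cat sizeL size_map -cardE big_ord_recr.
- move=> s; rewrite mem_cat => /orP[/L_saws[-> /ltnW] | /block_saws[-> ->]] //.
Qed.

Lemma npaths_gt0 s : saw adj i j s -> 0 < npaths adj i j (size s).
Proof. by move=> st; apply/card_gt0P; exists (in_tuple s); rewrite inE. Qed.

Lemma npaths_leq_npaths_le k r : k <= r -> npaths adj i j k <= npaths_le adj i j r.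
Proof.
by move=> kr; rewrite /npaths_le (bigD1 (Ordinal (kr : k < r.+1))) //= leq_addr.
Qed.

Lemma npaths2_leq_npaths_le k l r : k != l -> k <= r -> l <= r ->
  npaths adj i j k + npaths adj i j l <= npaths_le adj i j r.
Proof.
move=> kl kr lr; rewrite /npaths_le (bigD1 (Ordinal (kr : k < r.+1))) //=.
by rewrite (bigD1 (Ordinal (lr : l < r.+1))) //= ?leq_add2l ?addnA ?leq_addr // eq_sym.
Qed.

Lemma dist_eq_npaths_gt0 r : dist_eq adj i j r -> 0 < npaths adj i j r.
Proof.
case/andP=> /walk_len_saw[s sij sr] /forallP short.
suff <- : size s = r by apply: npaths_gt0.
apply/eqP; rewrite eqn_leq sr leqNgt; apply/negP=> lt.
by have := short (Ordinal lt); rewrite /= saw_walk_len.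
Qed.

Lemma shorter_saw r : ~~ dist_eq adj i j r -> 0 < npaths adj i j r ->
  exists2 s, saw adj i j s & size s < r.
Proof.
move=> nd /card_gt0P[t]; rewrite inE => /saw_walk_len; rewrite size_tuple => wr.
move: nd; rewrite /dist_eq wr negb_forall => /existsP[k].
rewrite negbK => /walk_len_saw[s sij sk].
by exists s => //; apply: leq_trans (ltn_ord k).
Qed.

Lemma npaths_lt_npaths_le r : ~~ dist_eq adj i j r -> 0 < npaths adj i j r ->
  npaths adj i j r < npaths_le adj i j r.
Proof.
move=> nd /(shorter_saw nd)[s sij sr].
apply: leq_trans (npaths2_leq_npaths_le (negbT (ltn_eqF sr)) (ltnW sr) (leqnn r)).
by rewrite addnC -addn1 leq_add2l npaths_gt0.
Qed.

End CountingSaws.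

Local Open Scope ring_scope.

Theorem proposition1 (n : nat) (adj : rel 'I_n) (r : nat) :
  simple_graph adj -> (1 <= r)%N ->
  at_most_one_cycle_in_balls adj r ->
  let B := distmx adj r - sawmx adj r in
  forall i j : 'I_n,
    [/\ (B i j != 0 -> cyc_rel adj r i j),
        (B i j != 0 -> (2 <= npaths_le adj i j r)%N),
        `|B i j| <= 1
      & (npaths_le adj i j r <= 2)%N].
Proof.
move=> [adj_sym _] _ one_cycle B i j.
have [uL sizeL L_saws] := saws_uptoP adj i j r.+1.
have L_balls : {in saws_upto adj i j r.+1,
    forall s, {subset i :: s <= ball adj i r :&: ball adj j r}}.
  by move=> s /L_saws[sij sr]; apply: saw_sub_balls.
have N_le2 : (npaths_le adj i j r <= 2)%N.
  rewrite /npaths_le -sizeL.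
  apply: (at_most_two_saws adj_sym (one_cycle i) (a := i) (b := j) uL) => s sL.
  split; first by case: (L_saws s sL).
  by move=> z /(L_balls s sL); rewrite inE => /andP[].
have N_cyc : (2 <= npaths_le adj i j r)%N -> cyc_rel adj r i j.
  rewrite /npaths_le -sizeL => /(uniq_size_gt1 uL)[s [t [sL tL st]]].
  have [c [cc sub _]] := distinct_saws_cycle adj_sym (L_saws s sL).1 (L_saws t tL).1 st.
  by exists c; apply: saws_cycle_in cc sub; apply: L_balls.
have m_le := npaths_leq_npaths_le adj i j (leqnn r).
have m_pos := @dist_eq_npaths_gt0 n adj i j r.
have m_lt := @npaths_lt_npaths_le n adj i j r.
have [B_ge2 B_le1] : (B i j != 0 -> (2 <= npaths_le adj i j r)%N) /\ `|B i j| <= 1.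
  by rewrite /B !mxE; case: (dist_eq adj i j r) m_pos m_lt => /= m_pos m_lt; split; lia.
by split=> // /B_ge2/N_cyc.
Qed.
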